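(* Let $\mathcal{C}$ be a permutation class (resp. polyomino class) and let $\mathcal{M}$ be its canonical $m$-basis. The minimal $m$-bases of $\mathcal{C}$ are exactly the subsets $\mathcal{B}\subseteq\mathcal{M}$ that are minimal for inclusion among subsets satisfying $\mathcal{C}=Av_{\mathfrak{S}}(\mathcal{B})$ (resp. $\mathcal{C}=Av_{\mathfrak{P}}(\mathcal{B})$).
   Context: Binary matrices have entries in $\{0,1\}$; $M'\preccurlyeq M$ (submatrix order) means $M'$ is obtained from $M$ by deleting some rows and/or columns. A permutation $\sigma$ of $\{1,\dots,n\}$ is identified with its permutation matrix ($M_\sigma(i,j)=1$ iff $i=\sigma(j)$); a permutation class is a set of permutations closed under taking submatrices that are permutation matrices (i.e. under taking patterns). A quasi-permutation matrix is a binary matrix with at most one $1$ per row and per column. A polyomino is a finite edge-connected union of unit cells of $\mathbb{Z}^2$ up to translation, identified with the binary matrix of its minimal bounding rectangle ($1$ for cells, $0$ otherwise); a polyomino class is a set of polyominoes closed under taking submatrices that are polyominoes. $Av_{\mathfrak{S}}(\mathcal{M})$ (resp. $Av_{\mathfrak{P}}(\mathcal{M})$) denotes the set of permutations (resp. polyominoes) having no submatrix in $\mathcal{M}$. Write $Av$ for $Av_{\mathfrak{S}}$ (permutation case) or $Av_{\mathfrak{P}}$ (polyomino case). For a class $\mathcal{C}$, $\mathcal{C}^+$ is the set of binary matrices that are submatrices of some element of $\mathcal{C}$; the canonical $m$-basis of $\mathcal{C}$ is the set of $\preccurlyeq$-minimal quasi-permutation matrices (permutation case), resp. binary matrices (polyomino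 case), not in $\mathcal{C}^+$. An $m$-basis of $\mathcal{C}$ is an antichain $\mathcal{M}$ (for $\preccurlyeq$) of matrices with $\mathcal{C}=Av(\mathcal{M})$. A minimal $m$-basis of $\mathcal{C}$ is an $m$-basis $\mathcal{M}$ such that (1) no strict subset $\mathcal{M}'\subsetneq\mathcal{M}$ satisfies $\mathcal{C}=Av(\mathcal{M}')$, and (2) for every $M\in\mathcal{M}$ and every submatrix $M'\preccurlyeq M$, either $M'=M$ or $\mathcal{C}\neq Av\big((\mathcal{M}\setminus\{M\})\cup\{M'\}\big)$. *)

From mathcomp Require Import all_boot matrix perm.

Set Implicit Arguments. Unset Strict Implicit. Unset Printing Implicit Defensive.

Record bmat := BMat { rows : nat; cols : nat; entry : 'M[bool]_(rows, cols) }.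
Arguments entry : clear implicits.

(* Submatrix order: N is obtained from M by deleting rows and/or columns,
   i.e. N = M restricted to an increasing choice of rows and of columns. *)
Definition submx (N M : bmat) : Prop :=
  exists (f : 'I_(rows N) -> 'I_(rows M)) (g : 'I_(cols N) -> 'I_(cols M)),
    (forall i i' : 'I_(rows N), (i < i')%N -> (f i < f i')%N) /\
    (forall j j' : 'I_(cols N), (j < j')%N -> (g j < g j')%N) /\
    (forall i j, entry N i j = entry M (f i) (g j)).

Definition perm_bmat (n : nat) (s : 'S_n) : bmat :=
  @BMat n n (\matrix_(i < n, j < n) (i == s j)).

Definition is_perm (M : bmat) : Prop := exists n (s : 'S_n), M = perm_bmat s.

Definition quasi_perm (M : bmat) : Prop :=
  (forall i j j', entry M i j -> entry M i j' -> j = j') /\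
  (forall i i' j, entry M i j -> entry M i' j -> i = i').

Definition adjn (a b : nat) : bool := (a.+1 == b) || (b.+1 == a).
Definition cell_adj (M : bmat) : rel ('I_(rows M) * 'I_(cols M)) :=
  fun c d => [&& entry M c.1 c.2, entry M d.1 d.2 &
      ((c.1 == d.1) && adjn c.2 d.2) || ((c.2 == d.2) && adjn c.1 d.1)].

Arguments cell_adj : clear implicits.

(* Polyomino: nonempty edge-connected set of cells, given by the binary matrix of
   its minimal bounding rectangle (so every row and every column contains a 1). *)
Definition polyomino (M : bmat) : Prop :=
  (exists i j, entry M i j) /\
  (forall i, exists j, entry M i j) /\
  (forall j, exists i, entry M i j) /\
  (forall c d : 'I_(rows M) * 'I_(cols M),
      entry M c.1 c.2 -> entry M d.1 d.2 -> connect (cell_adj M) c d).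

Inductive kind := PermK | PolyK.

Definition obj (K : kind) (M : bmat) : Prop :=
  match K with PermK => is_perm M | PolyK => polyomino M end.

(* Matrices considered for the canonical m-basis: quasi-permutation
   matrices, resp. all binary matrices. *)
Definition cand (K : kind) (M : bmat) : Prop :=
  match K with PermK => quasi_perm M | PolyK => True end.

Definition seteq (A B : bmat -> Prop) : Prop := forall x, A x <-> B x.
Definition sub_set (A B : bmat -> Prop) : Prop := forall x, A x -> B x.
Definition strict_sub (A B : bmat -> Prop) : Prop := sub_set A B /\ exists x, B x /\ ~ A x.

Definition is_class (K : kind) (C : bmat -> Prop) : Prop :=
  (forall M, C M -> obj K M) /\
  (forall M N, C M -> obj K N -> submx N M -> C N).

Definition Av (K : kind) (B : bmat -> Prop) : bmat -> Prop :=
  fun P => obj K P /\ forall M, B M -> ~ submx M P.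

Definition Cplus (C : bmat -> Prop) : bmat -> Prop :=
  fun M => exists P, C P /\ submx M P.

Definition canon_mbasis (K : kind) (C : bmat -> Prop) : bmat -> Prop :=
  fun M => [/\ cand K M, ~ Cplus C M &
     forall N, cand K N -> ~ Cplus C N -> submx N M -> N = M].

Definition antichain (B : bmat -> Prop) : Prop :=
  forall M N, B M -> B N -> submx M N -> M = N.

Definition mbasis (K : kind) (C B : bmat -> Prop) : Prop :=
  antichain B /\ seteq C (Av K B).

Definition minimal_mbasis (K : kind) (C B : bmat -> Prop) : Prop :=
  [/\ mbasis K C B,
      (forall B', strict_sub B' B -> ~ seteq C (Av K B')) &
      (forall M, B M -> forall N, submx N M ->
          N = M \/ ~ seteq C (Av K (fun X => (B X /\ X <> M) \/ X = N)))].

From Stdlib Require Import Classical.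
From mathcomp Require Import all_boot matrix perm.

Set Implicit Arguments. Unset Strict Implicit. Unset Printing Implicit Defensive.

(* Every element of an m-basis [B] of [C] lies outside [C^+], and every
   submatrix of an object is a candidate. Hence a non-candidate element of [B]
   never constrains [Av B], and replacing [M] in [B] by a submatrix [N] outside
   [C^+] never changes [Av B]: this is exactly what conditions (1) and (2) of a
   minimal m-basis forbid, so they force the elements of [B] to be minimal
   candidates outside [C^+]. Conversely, for such a [B] condition (2) can only
   fail through a non-candidate [N], whose removal is then covered by (1). *)

Definition remove (B : bmat -> Prop) (M : bmat) : bmat -> Prop :=
  fun X => B X /\ X <> M.

Definition replace (B : bmat -> Prop) (M N : bmat) : bmat -> Prop :=
  fun X => remove B M X \/ X = N.

Lemma submx_trans A B C : submx A B -> submx B C -> submx A C.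
Proof.
move=> [f1 [g1 [f1_inc [g1_inc e1]]]] [f2 [g2 [f2_inc [g2_inc e2]]]].
exists (f2 \o f1), (g2 \o g1); split; [|split].
- by move=> i i' lt_ii'; apply/f2_inc/f1_inc.
- by move=> j j' lt_jj'; apply/g2_inc/g1_inc.
- by move=> i j /=; rewrite e1 e2.
Qed.

Lemma incr_ord_inj m n (f : 'I_m -> 'I_n) :
  (forall i i' : 'I_m, (i < i')%N -> (f i < f i')%N) -> injective f.
Proof.
move=> f_inc i i' e; case: (ltngtP i i') => [lt_ii'|lt_i'i|/val_inj //].
- by have := f_inc _ _ lt_ii'; rewrite e ltnn.
- by have := f_inc _ _ lt_i'i; rewrite e ltnn.
Qed.

Lemma submx_perm_quasi N n (s : 'S_n) : submx N (perm_bmat s) -> quasi_perm N.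
Proof.
move=> [f [g [f_inc [g_inc e]]]].
have f_inj := incr_ord_inj f_inc; have g_inj := incr_ord_inj g_inc.
split.
- move=> i j j'; rewrite !e !mxE => /eqP e1 /eqP e2.
  by apply/g_inj/(@perm_inj _ s); rewrite -e1 -e2.
- move=> i i' j; rewrite !e !mxE => /eqP e1 /eqP e2.
  by apply: f_inj; rewrite e1 e2.
Qed.

Lemma submx_obj_cand K N P : obj K P -> submx N P -> cand K N.
Proof. by case: K => //= [[n [s ->]]]; apply: submx_perm_quasi. Qed.

Lemma strict_sub_remove B M : B M -> strict_sub (remove B M) B.
Proof.
move=> BM; rewrite /strict_sub /sub_set /remove.
by split=> [X [] | ]; last (exists M; split=> // [[]]).
Qed.

Lemma Av_notin_Cplus K C B M : seteq C (Av K B) -> B M -> ~ Cplus C M.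
Proof. by move=> CE BM [P [/CE [_ avP] sMP]]; apply: avP sMP. Qed.

Lemma Av_eq_on_cand K A A' :
  (forall X, cand K X -> (A X <-> A' X)) -> seteq (Av K A) (Av K A').
Proof.
move=> AE P; split=> [] [oP avP]; split=> // X AX sXP;
  have cX := submx_obj_cand oP sXP; apply: (avP X) sXP; exact/AE.
Qed.

Lemma Av_remove_noncand K B M :
  ~ cand K M -> seteq (Av K (remove B M)) (Av K B).
Proof.
move=> ncM; apply: Av_eq_on_cand => X cX; split=> [[] //| BX].
by split=> // eXM; apply: ncM; rewrite -eXM.
Qed.

Lemma Av_replace_noncand K B M N :
  ~ cand K N -> seteq (Av K (replace B M N)) (Av K (remove B M)).
Proof.
move=> ncN; apply: Av_eq_on_cand => X cX; split=> [[//|eXN]|]; last by left.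
by case: ncN; rewrite -eXN.
Qed.

Lemma Av_replace_submx K C B M N :
  seteq C (Av K B) -> submx N M -> ~ Cplus C N ->
  seteq C (Av K (replace B M N)).
Proof.
move=> CE sNM nCN P; split.
- move=> CP; have [oP avP] := (CE P).1 CP.
  split=> // X [[BX _] | ->]; first exact: avP.
  by move=> sNP; apply: nCN; exists P.
- move=> [oP avP]; apply/CE; split=> // X BX sXP.
  have [eXM | nXM] := classic (X = M).
    by rewrite eXM in sXP; apply: (avP N (or_intror erefl)); apply: submx_trans sNM sXP.
  by apply: (avP X (or_introl (conj BX nXM))).
Qed.

Theorem proposition5 (K : kind) (C : bmat -> Prop) :
  is_class K C ->
  forall B : bmat -> Prop,
    minimal_mbasis K C B <->
    [/\ sub_set B (canon_mbasis K C),
        seteq C (Av K B) &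
        (forall B', strict_sub B' B -> ~ seteq C (Av K B'))].
Proof.
move=> _ B; split.
- move=> [[_ CE] min_incl min_sub]; split=> // M BM.
  have nCM := Av_notin_Cplus CE BM.
  split=> // [|N cN nCN sNM].
    apply: NNPP => ncM; apply: (min_incl _ (strict_sub_remove BM)).
    by move=> P; rewrite CE Av_remove_noncand.
  have [// | not_basis] := min_sub M BM N sNM.
  by case: not_basis; apply: Av_replace_submx.
- move=> [canB CE min_incl]; split=> //.
    split=> // M N BM BN sMN.
    have [cM nCM _] := canB M BM; have [_ _ minN] := canB N BN.
    exact: minN cM nCM sMN.
  move=> M BM N sNM; have [-> | nNM] := classic (N = M); [by left | right].
  move=> CE'; have [_ _ minM] := canB M BM.
  have nCN := Av_notin_Cplus CE' (or_intror erefl : replace B M N N).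
  have [cN | ncN] := classic (cand K N); first exact/nNM/minM.
  apply: (min_incl _ (strict_sub_remove BM)).
  by move=> P; rewrite CE' Av_replace_noncand.
Qed.
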